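(* Let $n\ge1$, $k\ge1$, and let ${\bf u}_1,\ldots,{\bf u}_k\in\mathbb{R}^n$ (or indeterminate points). Define $$p^n_k({\bf x})=\prod_{\sigma\in\{0,1\}^k}\Bigl(d-\sum_{i=1}^k(-1)^{\sigma_i}\|{\bf u}_i-{\bf x}\|\Bigr),\qquad \|{\bf u}_i-{\bf x}\|=\sqrt{\textstyle\sum_{j=1}^n(u_{ij}-x_j)^2}.$$ Then $p^n_k$ is a polynomial which is monic of degree $2^k$ in $d$, and (with $d$ an indeterminate) its total degree in ${\bf x}=(x_1,\ldots,x_n)$ is $2^k$ if $k$ is odd and $2^k-\binom{k}{k/2}$ if $k$ is even.
   Context: The $k$-ellipsoid with foci ${\bf u}_i$ and radius $d$ is $\{{\bf x}\in\mathbb{R}^n:\sum_i\|{\bf u}_i-{\bf x}\|=d\}$; $p^n_k$ is its defining polynomial. *)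

From HB Require Import structures.
From mathcomp Require Import all_boot all_order all_algebra.
From mathcomp Require Import mpoly.
Set Implicit Arguments. Unset Strict Implicit. Unset Printing Implicit Defensive.
Import Order.TTheory GRing.Theory Num.Theory.
Local Open Scope ring_scope.

Definition edist (R : rcfType) (n : nat) (u x : 'I_n -> R) : R :=
  Num.sqrt (\sum_(j < n) (u j - x j) ^+ 2).

Definition pnk_val (R : rcfType) (n k : nat) (u : 'I_k -> 'I_n -> R)
    (d : R) (x : 'I_n -> R) : R :=
  \prod_(s : {ffun 'I_k -> bool})
     (d - \sum_(i < k) (-1) ^+ (s i) * edist (u i) x).

(* Write [r_i = ||u_i - x||], a root of [a_i = sum_j (u_ij - x_j)^2].  If
   [f(X - r) = g + r h] with [r^2 = a], then [f(X - r) f(X + r) = g^2 - a h^2];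
   eliminating the [r_i] one at a time turns the product over all sign vectors
   into a polynomial in [d] with coefficients polynomial in [x], monic of degree
   [2^k].  Its degree in [x] is read off along rays [x = t y]: each factor
   [d - sum_i (-1)^(s_i) ||u_i - t y||] is [d - (sum_i (-1)^(s_i)) t ||y|| + O(1)],
   so the product is [O(t^N)], with [N] the number of sign vectors of nonzero sum,
   and for a unit vector [y] and a suitable [d] it is also bounded below by a
   multiple of [t^N].  The top homogeneous component of a coefficient of
   [x]-degree [D] is nonzero somewhere, so [N] is exactly the [x]-degree, and
   [N = 2^k] for odd [k], [2^k - C(k, k/2)] for even [k]. *)

From HB Require Import structures.
From mathcomp Require Import all_boot all_order all_algebra.
From mathcomp Require Import mpoly.
From mathcomp Require Import ring lra zify.
Set Implicit Arguments. Unset Strict Implicit. Unset Printing Implicit Defensive.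
Import Order.TTheory GRing.Theory Num.Theory.
Local Open Scope ring_scope.

Section ShiftNorm.
Variable A : comNzRingType.
Implicit Types (a c : A) (s : seq A) (f : {poly A}).

(* With [r ^+ 2 = a], [f(X - r) = g(X) + r h(X)] for [(g, h) = shift_split a f]:
   Horner's rule on [f = c + X f'] gives
   [f(X - r) = (c + X g' - a h') + r (X h' - g')]. *)
Definition shift_split_step a c (gh : {poly A} * {poly A}) :=
  (c%:P + 'X * gh.1 - a *: gh.2, 'X * gh.2 - gh.1).

Definition shift_split a s := foldr (shift_split_step a) (0, 0) s.

Definition shift_norm a f :=
  (shift_split a f).1 ^+ 2 - a *: (shift_split a f).2 ^+ 2.

Lemma horner_shift_split (B : comNzRingType) (phi : {rmorphism A -> B}) a r d s :
  r ^+ 2 = phi a ->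
  (map_poly phi (Poly s)).[d - r] =
  (map_poly phi (shift_split a s).1).[d] + r * (map_poly phi (shift_split a s).2).[d].
Proof.
move=> r2; elim: s => [|c s IHs] /=; first by rewrite !rmorph0 !horner0 mulr0 addr0.
rewrite cons_poly_def !(rmorphD, rmorphM, rmorphB, rmorphN) /=.
by rewrite !(map_polyX, map_polyC, map_polyZ) /= !hornerE IHs -r2; ring.
Qed.

Lemma horner_shift_norm (B : comNzRingType) (phi : {rmorphism A -> B}) a r d f :
  r ^+ 2 = phi a ->
  (map_poly phi (shift_norm a f)).[d] =
  (map_poly phi f).[d - r] * (map_poly phi f).[d + r].
Proof.
move=> r2; have r2N : (- r) ^+ 2 = phi a by rewrite sqrrN.
have -> : d + r = d - - r by rewrite opprK.
rewrite -[f in RHS]polyseqK.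
rewrite (horner_shift_split _ _ r2) (horner_shift_split _ _ r2N).
rewrite rmorphB /= map_polyZ /= !rmorphXn /= hornerD hornerN hornerZ !horner_exp -r2.
ring.
Qed.

Lemma size_shift_split a s :
  [/\ (size (shift_split a s).1 <= size s)%N,
      (size (shift_split a s).2 <= (size s).-1)%N
    & (shift_split a s).1`_(size s).-1 = last 0 s].
Proof.
elim: s => [|c s [IH1 IH2 IH3]] /=; first by rewrite size_poly0 coef0.
have g_small j : (size s <= j)%N -> (shift_split a s).1`_j = 0.
  by move=> ?; apply/(leq_sizeP _ _ IH1).
have h_small j : ((size s).-1 <= j)%N -> (shift_split a s).2`_j = 0.
  by move=> ?; apply/(leq_sizeP _ _ IH2).
split.
- apply/leq_sizeP => -[|j] j_big //; rewrite !coefE /= g_small ?h_small //; try lia.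
  by rewrite mulr0 subr0 addr0.
- apply/leq_sizeP => -[|j] j_big; rewrite !coefE /= g_small ?h_small ?subr0 //; try lia.
- case: s IH1 IH2 IH3 g_small h_small => [|c' s] _ _ IH3 _ h_small;
    rewrite coefB coefD coefC coefXM coefZ /=.
    by rewrite !coef0 mulr0 subr0 addr0.
  by rewrite IH3 h_small // mulr0 subr0 add0r.
Qed.

Lemma monic_size_leq f N : (size f <= N.+1)%N -> f`_N = 1 ->
  f \is monic /\ size f = N.+1.
Proof.
move=> leN fN1; have sizef : size f = N.+1.
  apply/eqP; rewrite eqn_leq leN ltnNge; apply: contraTN isT => sz.
  by move: fN1; rewrite nth_default // => /eqP; rewrite eq_sym oner_eq0.
by split; rewrite // monicE lead_coefE sizef fN1.
Qed.

Lemma shift_norm_monic a f N : f \is monic -> size f = N.+1 ->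
  shift_norm a f \is monic /\ size (shift_norm a f) = (N.*2).+1.
Proof.
move=> fmonic sizef; have [] := size_shift_split a f.
rewrite sizef -nth_last -lead_coefE (monicP fmonic) /=.
set g := _.1; set h := _.2 => szg szh gN.
have [gmonic sizeg] := monic_size_leq szg gN.
have g2_monic : g ^+ 2 \is monic by exact: monic_exp.
have size_g2 : size (g ^+ 2) = (N.*2).+1.
  by rewrite expr2 size_monicM ?sizeg -?size_poly_eq0 ?sizeg // -addnn addnS.
have size_h2 : (size (a *: h ^+ 2) <= N.*2)%N.
  apply: leq_trans (size_scale_leq _ _) _; rewrite expr2.
  apply: leq_trans (size_polyMleq _ _) _.
  by rewrite -addnn (leq_trans (leq_pred _) (leq_add szh szh)).
apply: (monic_size_leq (N := N.*2)); rewrite /shift_norm -/g -/h.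
  apply: leq_trans (size_polyD _ _) _.
  by rewrite size_polyN size_g2 geq_max leqnn ltnW.
rewrite coefB (leq_sizeP _ _ size_h2) // subr0.
by move: g2_monic; rewrite monicE lead_coefE size_g2 => /eqP.
Qed.

End ShiftNorm.

Fixpoint sqrt_sum_poly (A : comNzRingType) (k : nat) : ('I_k -> A) -> {poly A} :=
  match k with
  | 0 => fun _ => 'X
  | k'.+1 => fun a => shift_norm (a ord0) (sqrt_sum_poly (fun i : 'I_k' => a (lift ord0 i)))
  end.

Lemma sqrt_sum_poly_monic (A : comNzRingType) k (a : 'I_k -> A) :
  sqrt_sum_poly a \is monic /\ size (sqrt_sum_poly a) = (2 ^ k).+1.
Proof.
elim: k a => [|k IHk] a /=; first by rewrite monicX size_polyX.
have [amonic asize] := IHk (fun i => a (lift ord0 i)).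
by rewrite expnS mul2n; apply: shift_norm_monic.
Qed.

Definition ffun_cons (T : Type) k (x : T) (s : {ffun 'I_k -> T}) : {ffun 'I_k.+1 -> T} :=
  [ffun i => if unlift ord0 i is Some j then s j else x].

Lemma ffun_cons0 (T : Type) k x (s : {ffun 'I_k -> T}) : ffun_cons x s ord0 = x.
Proof. by rewrite ffunE unlift_none. Qed.

Lemma ffun_consS (T : Type) k x (s : {ffun 'I_k -> T}) i : ffun_cons x s (lift ord0 i) = s i.
Proof. by rewrite ffunE liftK. Qed.

Lemma big_ffun_cons (R : Type) (idx : R) (op : Monoid.com_law idx) (T : finType) k
    (F : {ffun 'I_k.+1 -> T} -> R) :
  \big[op/idx]_(s : {ffun 'I_k.+1 -> T}) F s =
  \big[op/idx]_(x : T) \big[op/idx]_(s : {ffun 'I_k -> T}) F (ffun_cons x s).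
Proof.
rewrite pair_bigA /= (reindex (fun xs => ffun_cons xs.1 xs.2)) //=.
exists (fun s : {ffun 'I_k.+1 -> T} => (s ord0, [ffun j => s (lift ord0 j)])).
  move=> [x s] _; congr pair; first exact: ffun_cons0.
  by apply/ffunP => j; rewrite ffunE ffun_consS.
move=> s _; apply/ffunP => i; rewrite !ffunE.
by case: unliftP => [j ->|->]; rewrite ?ffunE.
Qed.

Lemma horner_sqrt_sum_poly (A B : comNzRingType) (phi : {rmorphism A -> B}) k
    (a : 'I_k -> A) (r : 'I_k -> B) d :
  (forall i, r i ^+ 2 = phi (a i)) ->
  (map_poly phi (sqrt_sum_poly a)).[d] =
  \prod_(s : {ffun 'I_k -> bool}) (d - \sum_(i < k) (-1) ^+ s i * r i).
Proof.
elim: k a r d => [|k IHk] a r d r2 /=.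
  rewrite map_polyX hornerX; under eq_bigr => s _ do rewrite big_ord0 subr0.
  by rewrite prodr_const card_ffun card_ord expn0 expr1.
rewrite (horner_shift_norm _ _ (r2 ord0)) !(IHk _ (fun i => r (lift ord0 i))) //.
rewrite big_ffun_cons big_bool /= mulrC.
by congr (_ * _); apply: eq_bigr => s _;
  rewrite big_ord_recl ffun_cons0; under [in RHS]eq_bigr => i _ do rewrite ffun_consS;
  rewrite /= ?expr0 ?expr1; ring.
Qed.

Lemma poly_eq0_of_horner (R : numDomainType) (p : {poly R}) :
  (forall x, p.[x] = 0) -> p = 0.
Proof.
move=> p0; apply: (@roots_geq_poly_eq0 _ _ [seq i%:R | i <- iota 0 (size p)]).
- by apply/allP => x _; rewrite /root p0.
- by rewrite map_inj_uniq ?iota_uniq // => i j /eqP; rewrite eqr_nat => /eqP.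
- by rewrite size_map size_iota.
Qed.

Lemma mcoeff_msupp_sum n (R : comNzRingType) (p : {mpoly R[n]}) m :
  \sum_(m' <- msupp p) p@_m' * (m' == m)%:R = p@_m.
Proof.
by rewrite [in RHS](mpolyE p) raddf_sum; apply: eq_bigr => m' _; rewrite /= mcoeffZ mcoeffX.
Qed.

Lemma mcoeff_pihomog n (R : comNzRingType) (p : {mpoly R[n]}) d m :
  (pihomog mdeg d p)@_m = (mdeg m == d)%:R * p@_m.
Proof.
rewrite pihomogE raddf_sum big_mkcond -mcoeff_msupp_sum mulr_sumr /=.
apply: eq_bigr => m' _; rewrite mcoeffZ mcoeffX.
by have [->|] := eqVneq m' m; case: (_ == d); rewrite ?mulr0 ?mul0r ?mul1r.
Qed.

Definition mnm_behead n (m : 'X_{1..n.+1}) : 'X_{1..n} :=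
  [multinom m (lift ord0 i) | i < n].

Lemma eq_mnm_behead n (m m' : 'X_{1..n.+1}) :
  (m' ord0 == m ord0) && (mnm_behead m' == mnm_behead m) = (m' == m).
Proof.
apply/andP/eqP => [[/eqP eq0 /eqP eqS]|-> //]; apply/mnmP => i.
case: (unliftP ord0 i) => [j ->|-> //].
by have := congr1 (fun m : 'X_{1..n} => m j) eqS; rewrite !mnmE.
Qed.

Lemma mpoly_eq0_of_meval (R : numDomainType) n (p : {mpoly R[n]}) :
  (forall v, p.@[v] = 0) -> p = 0.
Proof.
elim: n p => [|n IHn] p p0.
  have := p0 (fun _ => 0); rewrite -(mpolyKC p) mevalC => ->.
  exact: mpolyC0.
apply/mpolyP => m; rewrite mcoeff0.
pose slice : {mpoly R[n]} :=
  \sum_(m' <- msupp p | m' ord0 == m ord0) p@_m' *: 'X_[mnm_behead m'].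
have slice0 : slice = 0.
  apply: IHn => v.
  pose r : {poly R} := \sum_(m' <- msupp p)
    (p@_m' * \prod_(j < n) v j ^+ m' (lift ord0 j)) *: 'X^(m' ord0).
  have r0 : r = 0.
    apply: poly_eq0_of_horner => s.
    rewrite -(p0 (fun i => if unlift ord0 i is Some j then v j else s)).
    rewrite mevalE horner_sum; apply: eq_bigr => m' _.
    rewrite hornerZ hornerXn big_ord_recl unlift_none.
    by under [in RHS]eq_bigr => j _ do rewrite liftK; ring.
  have := congr1 (coefp (m ord0)) r0; rewrite /= coef0 coef_sumMXn => <-.
  rewrite raddf_sum /=; apply: eq_bigr => m' _.
  by rewrite mevalZ mevalX; congr (_ * _); apply: eq_bigr => j _; rewrite mnmE.
have := congr1 (mcoeff (mnm_behead m)) slice0.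
rewrite mcoeff0 => <-; rewrite -[LHS]mcoeff_msupp_sum raddf_sum [RHS]big_mkcond /=.
apply: eq_bigr => m' _; rewrite mcoeffZ mcoeffX -eq_mnm_behead.
by case: (_ == _); rewrite ?mulr0.
Qed.

Section Rays.
Variables (R : comNzRingType) (n : nat).
Implicit Types (c : {mpoly R[n]}) (P : {poly {mpoly R[n]}}) (y : 'I_n -> R).

Definition ray_poly c y : {poly R} :=
  \sum_(m <- msupp c) (c@_m * \prod_(j < n) y j ^+ m j) *: 'X^(mdeg m).

Lemma horner_ray_poly c y t : (ray_poly c y).[t] = c.@[fun j => t * y j].
Proof.
rewrite mevalE horner_sum; apply: eq_bigr => m _.
rewrite hornerZ hornerXn -mulrA; congr (_ * _).
under [in RHS]eq_bigr => j _ do rewrite exprMn.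
by rewrite big_split /= prodrXr mdegE mulrC.
Qed.

Lemma size_ray_poly c y : (size (ray_poly c y) <= msize c)%N.
Proof.
apply/leq_sizeP => i le_ci; rewrite coef_sumMXn big1_seq // => m /andP[/eqP mi mc].
by have := msize_mdeg_lt mc; rewrite mi ltnNge le_ci.
Qed.

Lemma coef_ray_poly c y i : (ray_poly c y)`_i = (pihomog mdeg i c).@[y].
Proof.
rewrite coef_sumMXn pihomogE raddf_sum /=; apply: eq_bigr => m _.
by rewrite mevalZ mevalX.
Qed.

Definition ray_slice P (d : R) y : {poly R} :=
  \sum_(i < size P) d ^+ i *: ray_poly P`_i y.

Lemma horner_ray_slice P d y t :
  (ray_slice P d y).[t] = (map_poly (meval (fun j => t * y j)) P).[d].
Proof.
rewrite horner_sum (horner_coef_wide _ (size_poly _ _)).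
apply: eq_bigr => i _; rewrite hornerZ horner_ray_poly coef_map_id0 ?meval0 //.
exact: mulrC.
Qed.

Lemma size_ray_slice P d y :
  (size (ray_slice P d y) <= \max_(i < size P) msize P`_i)%N.
Proof.
apply: leq_trans (size_sum _ _ _) _; apply/bigmax_leqP => i _.
apply: leq_trans (size_scale_leq _ _) _; apply: leq_trans (size_ray_poly _ _) _.
exact: (@leq_bigmax_cond _ xpredT (fun i : 'I_(size P) => msize P`_i)).
Qed.

End Rays.

Section RaysNum.
Variables (R : numDomainType) (n : nat).
Implicit Types (c : {mpoly R[n]}) (P : {poly {mpoly R[n]}}).

Lemma msize_le_ray c B : (forall y, size (ray_poly c y) <= B)%N -> (msize c <= B)%N.
Proof.
move=> ray_small; rewrite leqNgt; apply/negP => lt_Bc.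
have c_neq0 : c != 0 by rewrite -msize_poly_eq0 -lt0n (leq_ltn_trans _ lt_Bc).
have top0 : pihomog mdeg (msize c).-1 c = 0.
  apply: mpoly_eq0_of_meval => y; rewrite -coef_ray_poly.
  by apply/(leq_sizeP _ _ (ray_small y)); rewrite -ltnS prednK // (leq_ltn_trans _ lt_Bc).
have := congr1 (mcoeff (mlead c)) top0.
rewrite mcoeff_pihomog -(mlead_deg c_neq0) eqxx mul1r mcoeff0 => /eqP.
by rewrite mleadc_eq0 (negbTE c_neq0).
Qed.

Lemma max_msize_le_ray P B : (forall d y, size (ray_slice P d y) <= B)%N ->
  (\max_(i < size P) msize P`_i <= B)%N.
Proof.
move=> slice_small; apply/bigmax_leqP => i _; apply: msize_le_ray => y.
apply/leq_sizeP => j le_Bj.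
pose w : {poly R} := \poly_(l < size P) (ray_poly P`_l y)`_j.
suff /(congr1 (coefp i)) : w = 0 by rewrite /= coef_poly ltn_ord coef0.
apply: poly_eq0_of_horner => d.
rewrite horner_poly -[RHS](leq_sizeP _ _ (slice_small d y) j le_Bj) coef_sum.
by apply: eq_bigr => l _; rewrite coefZ mulrC.
Qed.

End RaysNum.

Section Growth.
Variable R : realFieldType.
Implicit Types (q : {poly R}) (c t : R).

Lemma exists_large_lt_mul T S c : 0 < c -> exists t, [/\ T <= t, 1 <= t & S < c * t].
Proof.
move=> c_gt0; exists (1 + `|T| + `|S| / c).
have := ler_norm T; have := ler_norm S; have := normr_ge0 T.
have : 0 <= `|S| / c by rewrite divr_ge0 ?normr_ge0 ?ltW.
have : c * (`|S| / c) = `|S| by rewrite mulrCA divff ?mulr1 ?gt_eqF.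
by split; nra.
Qed.

Lemma norm_horner_trunc q N t : 1 <= t ->
  `|\sum_(i < N) q`_i * t ^+ i| * t <= (\sum_(i < N) `|q`_i|) * t ^+ N.
Proof.
move=> t_ge1; have t_ge0 : 0 <= t by lra.
apply: le_trans (ler_wpM2r t_ge0 (ler_norm_sum _ _ _)) _.
rewrite !mulr_suml; apply: ler_sum => i _.
rewrite normrM (ger0_norm (exprn_ge0 _ t_ge0)) -mulrA -exprSr.
by apply: ler_wpM2l; [exact: normr_ge0 | exact: ler_weXn2l].
Qed.

Lemma size_poly_le_of_growth q C T m :
  (forall t, T <= t -> `|q.[t]| <= C * t ^+ m) -> (size q <= m.+1)%N.
Proof.
move=> q_small; rewrite leqNgt; apply/negP => lt_mq.
have [N sizeq] : exists N, size q = N.+1.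
  by exists (size q).-1; rewrite prednK // (ltn_trans _ lt_mq).
have lead_gt0 : 0 < `|q`_N|.
  by rewrite normr_gt0 -[N]/(N.+1.-1) -sizeq -lead_coefE lead_coef_eq0 -size_poly_eq0 sizeq.
set S := \sum_(i < N) `|q`_i|.
have [t [le_Tt t_ge1 large]] := exists_large_lt_mul T (`|C| + S) lead_gt0.
have tN_gt0 : 0 < t ^+ N by apply: exprn_gt0; lra.
have := norm_horner_trunc q N t_ge1; rewrite -/S.
set Z := \sum_(i < N) _ => Z_small.
have qt : q.[t] = Z + q`_N * t ^+ N by rewrite horner_coef sizeq big_ord_recr.
have top_le : `|q`_N| * t ^+ N <= `|q.[t]| + `|Z|.
  have := ler_normB q.[t] Z.
  by rewrite {1}qt [Z + _]addrC addrK normrM (gtr0_norm tN_gt0).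
have Ct : C * t ^+ m * t <= `|C| * t ^+ N.
  rewrite -mulrA -exprSr; apply: le_trans (ler_wpM2r _ (ler_norm C)) _.
    by apply: exprn_ge0; lra.
  by apply: ler_wpM2l; [exact: normr_ge0 | apply: ler_weXn2l; rewrite // -ltnS -sizeq].
have t_ge0 : 0 <= t by lra.
have top_le_t := ler_wpM2r t_ge0 top_le.
have qt_small := ler_wpM2r t_ge0 (q_small t le_Tt).
suff : `|q`_N| * t * t ^+ N <= (`|C| + S) * t ^+ N by rewrite ler_pM2r //; lra.
lra.
Qed.

Lemma size_poly_gt_of_growth q c T m : 0 < c ->
  (forall t, T <= t -> c * t ^+ m <= `|q.[t]|) -> (m < size q)%N.
Proof.
move=> c_gt0 q_large; rewrite ltnNge; apply/negP => le_qm.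
set S := \sum_(i < m) `|q`_i|.
have [t [le_Tt t_ge1 large]] := exists_large_lt_mul T S c_gt0.
have tm_gt0 : 0 < t ^+ m by apply: exprn_gt0; lra.
have := norm_horner_trunc q m t_ge1; rewrite -horner_coef_wide // -/S => qt_small.
have t_ge0 : 0 <= t by lra.
have qt_large := ler_wpM2r t_ge0 (q_large t le_Tt).
suff : c * t * t ^+ m <= S * t ^+ m by rewrite ler_pM2r //; lra.
lra.
Qed.

End Growth.

Section Distance.
Variable R : rcfType.

Lemma norm_subr_mul_le (r s : R) : 0 <= r -> 0 <= s ->
  `|r - s| * s <= `|r ^+ 2 - s ^+ 2|.
Proof.
move=> r_ge0 s_ge0; rewrite subr_sqr normrM (ger0_norm (addr_ge0 r_ge0 s_ge0)).
by apply: ler_wpM2l; [exact: normr_ge0 | rewrite lerDr].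
Qed.

(* [edist u (t y) = t |y| + O(1)]: the product of [edist u (t y) - t |y|] with
   [t |y|] is at most [|a - 2 t b|], linear in [t]. *)
Lemma edist_ray_bounded n (u y : 'I_n -> R) : exists K, forall t, 1 <= t ->
  `|edist u (fun j => t * y j) - t * Num.sqrt (\sum_j y j ^+ 2)| <= K.
Proof.
set a := \sum_j u j ^+ 2; set b := \sum_j u j * y j; set Y2 := \sum_j y j ^+ 2.
have edist_sqr t : edist u (fun j => t * y j) ^+ 2 = a - 2 * t * b + t ^+ 2 * Y2.
  rewrite sqr_sqrtr ?sumr_ge0 // => [|j _]; last exact: sqr_ge0.
  rewrite (eq_bigr (fun j => u j ^+ 2 - 2 * t * (u j * y j) + t ^+ 2 * y j ^+ 2)).
    by rewrite big_split sumrB /= -!mulr_sumr.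
  by move=> j _; ring.
have [Y2_0|Y2_neq0] := eqVneq Y2 0.
  have y0 j : y j = 0.
    apply/eqP; rewrite -sqrf_eq0; apply/eqP.
    by apply: (psumr_eq0P (fun j _ => sqr_ge0 (y j)) Y2_0).
  exists (Num.sqrt a) => t _; rewrite -/Y2 Y2_0 sqrtr0 mulr0 subr0.
  by rewrite /edist; under eq_bigr => j _ do rewrite y0 mulr0 subr0; rewrite ger0_norm ?sqrtr_ge0.
have Y2_ge0 : 0 <= Y2 by rewrite sumr_ge0 // => j _; exact: sqr_ge0.
have Y_gt0 : 0 < Num.sqrt Y2 by rewrite sqrtr_gt0 lt_def Y2_neq0.
exists ((`|a| + 2 * `|b|) / Num.sqrt Y2) => t t_ge1; rewrite -/Y2 ler_pdivlMr //.
set Y := Num.sqrt Y2; set r := edist _ _.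
have tY_ge0 : 0 <= t * Y by rewrite mulr_ge0 ?ltW //; lra.
have := norm_subr_mul_le (sqrtr_ge0 _ : 0 <= r) tY_ge0.
have YY : Y ^+ 2 = Y2 by rewrite sqr_sqrtr.
rewrite edist_sqr exprMn YY addrK => le_ab.
have := ler_normB a (2 * t * b); rewrite !normrM (ger0_norm (_ : 0 <= 2)) //.
rewrite (ger0_norm (_ : 0 <= t)); last lra.
have := normr_ge0 a; have := normr_ge0 b; have := normr_ge0 (r - t * Y).
nra.
Qed.

End Distance.

Section SignSums.
Variables (R : numDomainType) (k : nat).
Implicit Types (s : {ffun 'I_k -> bool}).

Definition sign_sum s : R := \sum_(i < k) (-1) ^+ s i.

Lemma sign_sumE s : sign_sum s = k%:R - (2 * #|[set i | s i]|)%:R.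
Proof.
rewrite /sign_sum (eq_bigr (fun i => 1 - 2 * (s i : nat)%:R)); last first.
  by move=> i _; case: (s i); rewrite /= ?expr0 ?expr1; ring.
rewrite sumrB sumr_const card_ord -mulr_sumr -natr_sum natrM cardsE -sum1_card.
by rewrite [in RHS]big_mkcond; congr (_ - _ * _%:R); apply: eq_bigr => i _; case: (s i).
Qed.

Lemma sign_sum_eq0 s : (sign_sum s == 0) = (k == 2 * #|[set i | s i]|)%N.
Proof. by rewrite sign_sumE subr_eq0 eqr_nat. Qed.

Lemma norm_sign_sum_ge1 s : sign_sum s != 0 -> 1 <= `|sign_sum s|.
Proof.
rewrite sign_sum_eq0 sign_sumE; set c := #|_| => k_neq.
have [le_ck|lt_kc] := leqP (2 * c) k.
  by rewrite -natrB // ger0_norm ?ler0n // ler1n; lia.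
by rewrite -opprB -natrB ?(ltnW lt_kc) // normrN ger0_norm ?ler0n // ler1n; lia.
Qed.

Lemma norm_sign_sum_le s : `|sign_sum s| <= k%:R.
Proof.
apply: le_trans (ler_norm_sum _ _ _) _.
by under eq_bigr => i _ do rewrite normrX normrN1 expr1n; rewrite sumr_const card_ord.
Qed.

Lemma card_sign_sum_eq0 :
  #|[pred s | sign_sum s == 0]| = (if odd k then 0 else 'C(k, k./2))%N.
Proof.
have balancedE s : (sign_sum s == 0) = ~~ odd k && (#|[set i | s i]| == k./2).
  rewrite sign_sum_eq0; have := odd_double_half k; rewrite -muln2.
  by case: (odd k) => /= kE; [apply/negbTE/eqP | apply/eqP/eqP]; lia.
case: ifP => k_odd; first by apply: eq_card0 => s; rewrite inE balancedE k_odd.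
pose setof s : {set 'I_k} := [set i | s i].
have setof_inj : injective setof.
  move=> s1 s2 eq12; apply/ffunP => i.
  by have := congr1 (fun A : {set 'I_k} => i \in A) eq12; rewrite !inE.
rewrite -[k in 'C(k, _)]card_ord -card_draws -(card_imset _ setof_inj).
apply: eq_card => A; rewrite !inE; apply/imsetP/idP => [[s]|A_half].
  by rewrite -topredE /= balancedE k_odd => s_half ->.
exists [ffun i => i \in A]; last by apply/setP => i; rewrite inE ffunE.
rewrite -topredE /= balancedE k_odd /=.
by have -> : [set i | [ffun i => i \in A] i] = A by apply/setP => i; rewrite inE ffunE.
Qed.

Lemma card_sign_sum_neq0 : #|[pred s | sign_sum s != 0]| =
  (if odd k then 2 ^ k else 2 ^ k - 'C(k, k./2))%N.
Proof.
have := cardC [pred s : {ffun 'I_k -> bool} | sign_sum s == 0].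
rewrite card_ffun card_bool card_ord card_sign_sum_eq0.
rewrite (_ : #|[pred s | _ != 0]| = #|[predC [pred s | sign_sum s == 0]]|); last exact: eq_card.
by case: ifP => _ <-; rewrite ?add0n ?addKn.
Qed.

End SignSums.

Section RayGrowth.
Variables (R : rcfType) (n k : nat) (u : 'I_k -> 'I_n -> R).

Lemma signed_edist_ray_bounded (y : 'I_n -> R) : exists K, forall t, 1 <= t ->
  forall s : {ffun 'I_k -> bool},
  `|\sum_(i < k) (-1) ^+ s i * edist (u i) (fun j => t * y j)
    - sign_sum R s * (t * Num.sqrt (\sum_j y j ^+ 2))| <= K.
Proof.
have [K K_bound] := fin_all_exists (fun i => edist_ray_bounded (u i) y).
exists (\sum_i K i) => t t_ge1 s.
rewrite /sign_sum mulr_suml -sumrB; apply: le_trans (ler_norm_sum _ _ _) _.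
by apply: ler_sum => i _; rewrite -mulrBr normrMsign; exact: K_bound.
Qed.

Lemma pnk_val_ray_upper d (y : 'I_n -> R) : exists C T, forall t, T <= t ->
  `|pnk_val u d (fun j => t * y j)| <=
    C * t ^+ #|[pred s : {ffun 'I_k -> bool} | sign_sum R s != 0]|.
Proof.
have [K K_bound] := signed_edist_ray_bounded y.
have K_ge0 : 0 <= K := le_trans (normr_ge0 _) (K_bound 1 (lexx _) [ffun=> false]).
set Y := Num.sqrt _ in K_bound; have Y_ge0 : 0 <= Y := sqrtr_ge0 _.
set L := `|d| + k%:R * Y + K.
exists (\prod_(s : {ffun 'I_k -> bool}) L), 1 => t t_ge1.
have factor_le (s : {ffun 'I_k -> bool}) :
    0 <= `|d - \sum_(i < k) (-1) ^+ s i * edist (u i) (fun j => t * y j)|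
      <= L * (if sign_sum R s != 0 then t else 1).
  rewrite normr_ge0 /=; move: (K_bound t t_ge1 s); set D := \sum_(i < k) _; set e := sign_sum R s.
  have tY_ge0 : 0 <= t * Y by rewrite mulr_ge0 //; lra.
  have tri : `|d - D| <= `|d| + `|D - e * (t * Y)| + `|e| * (t * Y).
    have -> : `|e| * (t * Y) = `|e * (t * Y)| by rewrite normrM (ger0_norm tY_ge0).
    rewrite (_ : d - D = d - (D - e * (t * Y)) - e * (t * Y)).
      by apply: le_trans (ler_normB _ _) _; rewrite lerD2r ler_normB.
    by ring.
  have dK_ge0 : 0 <= `|d| + K by rewrite addr_ge0 ?normr_ge0.
  have kY_ge0 : 0 <= k%:R * Y by rewrite mulr_ge0 ?ler0n.
  case: eqP => [e0|_] D_le /=.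
    by move: tri D_le; rewrite e0 normr0 !mul0r subr0 mulr1 /L; lra.
  have := ler_wpM2r tY_ge0 (norm_sign_sum_le R s : `|e| <= k%:R).
  have := ler_wpM2l dK_ge0 t_ge1; rewrite /L; lra.
rewrite /pnk_val normr_prod; apply: le_trans (ler_prod _ (fun s _ => factor_le s)) _.
by rewrite big_split /= -big_mkcond /= !prodr_const.
Qed.

Lemma pnk_val_ray_lower : (0 < n)%N -> exists y d c T, 0 < c /\ forall t, T <= t ->
  c * t ^+ #|[pred s : {ffun 'I_k -> bool} | sign_sum R s != 0]| <=
    `|pnk_val u d (fun j => t * y j)|.
Proof.
move=> n_gt0; pose j0 := Ordinal n_gt0; pose y j : R := (j == j0)%:R.
have Y1 : Num.sqrt (\sum_j y j ^+ 2) = 1.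
  rewrite (bigD1 j0) //= big1 => [|j /negbTE j_neq]; last by rewrite /y j_neq expr0n.
  by rewrite /y eqxx expr1n addr0 sqrtr1.
have [K K_bound] := signed_edist_ray_bounded y; rewrite Y1 in K_bound.
have K_ge0 : 0 <= K := le_trans (normr_ge0 _) (K_bound 1 (lexx _) [ffun=> false]).
(* With [d = 1 + K] the factors of zero sign sum stay [>= 1], and for
   [t >= 2 (1 + 2 K)] the others are [>= t / 2]. *)
exists y, (1 + K), (2^-1 ^+ #|[pred s : {ffun 'I_k -> bool} | sign_sum R s != 0]|),
  (2 * (1 + 2 * K)).
split=> [|t le_Tt]; first by rewrite exprn_gt0 // invr_gt0.
have t_ge1 : 1 <= t by lra.
have factor_ge (s : {ffun 'I_k -> bool}) :
    0 <= (if sign_sum R s != 0 then t / 2 else 1)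
      <= `|1 + K - \sum_(i < k) (-1) ^+ s i * edist (u i) (fun j => t * y j)|.
  apply/andP; split; first by case: ifP; lra.
  move: (K_bound t t_ge1 s); set D := \sum_(i < k) _; set e := sign_sum R s.
  rewrite mulr1 => D_near; have t_ge0 : 0 <= t by lra.
  case: eqP => [e0|/eqP /norm_sign_sum_ge1 e_ge1] /=.
    move: D_near; rewrite e0 mul0r subr0 => D_le.
    by have := ler_norm (1 + K - D); have := ler_norm D; lra.
  have := ler_normB (1 + K - (D - e * t)) (1 + K - D).
  rewrite (_ : 1 + K - (D - e * t) - (1 + K - D) = e * t); last by ring.
  rewrite normrM (ger0_norm t_ge0).
  have := ler_normB (1 + K) (D - e * t); rewrite (ger0_norm (_ : 0 <= 1 + K)); last lra.
  have := ler_wpM2r t_ge0 e_ge1; lra.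
rewrite /pnk_val normr_prod; apply: le_trans (ler_prod _ (fun s _ => factor_ge s)).
by rewrite -big_mkcond prodr_const exprMn mulrC.
Qed.

End RayGrowth.

Unset Implicit Arguments.

Theorem theorem4p3 (R : rcfType) (n k : nat) (u : 'I_k -> 'I_n -> R) :
  (1 <= n)%N -> (1 <= k)%N ->
  exists P : {poly {mpoly R[n]}},
    (forall (d : R) (x : 'I_n -> R),
        (map_poly (fun q : {mpoly R[n]} => q.@[x]) P).[d] = pnk_val u d x)
    /\ P \is monic /\ size P = (2 ^ k).+1
    /\ (\max_(i < size P) msize P`_i =
         (if odd k then 2 ^ k else 2 ^ k - 'C(k, k./2)).+1)%N.
Proof.
move=> n_gt0 _.
pose a i : {mpoly R[n]} := \sum_(j < n) ((u i j)%:MP - 'X_j) ^+ 2.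
pose P := sqrt_sum_poly a.
have P_val d x : (map_poly (meval x) P).[d] = pnk_val u d x.
  apply: horner_sqrt_sum_poly => i; rewrite sqr_sqrtr ?sumr_ge0 // => [|j _].
    by rewrite rmorph_sum; apply: eq_bigr => j _; rewrite rmorphXn rmorphB /= mevalC mevalXU.
  exact: sqr_ge0.
have [P_monic P_size] := sqrt_sum_poly_monic a.
exists P; do !split => //.
rewrite -(card_sign_sum_neq0 R).
have slice_val d y t : (ray_slice P d y).[t] = pnk_val u d (fun j => t * y j).
  by rewrite horner_ray_slice P_val.
apply/eqP; rewrite eqn_leq; apply/andP; split.
  apply: max_msize_le_ray => d y; have [C [T P_small]] := pnk_val_ray_upper u d y.
  by apply: (@size_poly_le_of_growth _ _ C T) => t /P_small; rewrite slice_val.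
have [y [d [c [T [c_gt0 P_large]]]]] := pnk_val_ray_lower u n_gt0.
apply: leq_trans (size_ray_slice P d y).
by apply: (size_poly_gt_of_growth c_gt0 (T := T)) => t /P_large; rewrite slice_val.
Qed.
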